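(* Let $X$ and $Y$ be real Banach spaces such that $Y$ is uniformly convex and the set of norm-attaining operators $\mathrm{NA}(\mathcal F(X),Y)$ is dense in $\mathcal L(\mathcal F(X),Y)$. Then $\mathrm{A}(X,Y)$ is dense in $\mathrm{Lip}_0(X,Y)$.
   Context: $\widetilde X=\{(x,y)\in X^2:x\neq y\}$. $\mathrm{Lip}_0(X,Y)$ is the Banach space of Lipschitz $f\colon X\to Y$ with $f(0)=0$ and norm $\|f\|=\sup_{(x,y)\in\widetilde X}\|f(x)-f(y)\|/\|x-y\|$. The Lipschitz-free space $\mathcal F(X)$ is the closed linear span of $\{\delta_x:x\in X\}$ in $\mathrm{Lip}_0(X,\mathbb R)^*$, $\delta_x(g)=g(x)$. $\mathcal L(Z,Y)$ is the space of bounded linear operators with the operator norm, and $\mathrm{NA}(Z,Y)$ the set of $T\in\mathcal L(Z,Y)$ with $\|Tz\|=\|T\|$ for some $z\in S_Z$. $\mathrm{A}(X,Y)$ is the set of $f\in\mathrm{Lip}_0(X,Y)$ for which there exist $z\in Y$ with $\|z\|=\|f\|$ and $(x_n,y_n)\in\widetilde X$ with $\frac{f(x_n)-f(y_n)}{\|x_n-y_n\|}\to z$. *)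

From HB Require Import structures.
From mathcomp Require Import all_boot all_order all_algebra.
From mathcomp Require Import all_classical all_reals all_analysis.
Set Implicit Arguments. Unset Strict Implicit. Unset Printing Implicit Defensive.
Import Order.TTheory GRing.Theory Num.Theory.
Import numFieldNormedType.Exports.
Local Open Scope classical_set_scope.
Local Open Scope ring_scope.

Section Defs.
Context {R : realType}.

Definition Lip0 (X Y : normedModType R) (f : X -> Y) : Prop :=
  f 0 = 0 /\ exists C : R, forall x y : X, `|f x - f y| <= C * `|x - y|.

Definition lipnorm (X Y : normedModType R) (f : X -> Y) : R :=
  sup [set r : R | exists x y : X, x <> y /\ r = `|f x - f y| / `|x - y|].

(** Elements of Lip_0(X,R)^* are represented as maps (X -> R) -> R, normalised
    to vanish outside Lip_0(X,R) (so the representation is unique). *)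
Definition dnorm (X : normedModType R) (mu : (X -> R) -> R) : R :=
  sup [set r : R | exists g : X -> R, [/\ Lip0 g, lipnorm g <= 1 & r = `|mu g|]].

(** Finite linear combination  sum_i a_i delta_{x_i}  evaluated at g. *)
Definition comb_delta (X : normedModType R) (s : seq (R * X)) (g : X -> R) : R :=
  \sum_(p <- s) p.1 * g p.2.

(** The Lipschitz-free space F(X): closure, in the dual norm of Lip_0(X,R)^*,
    of the linear span of the evaluations delta_x. *)
Definition FX (X : normedModType R) : set ((X -> R) -> R) :=
  [set mu | (forall g : X -> R, ~ Lip0 g -> mu g = 0) /\
     forall eps : R, 0 < eps -> exists s : seq (R * X),
       forall g : X -> R, Lip0 g -> lipnorm g <= 1 ->
         `|mu g - comb_delta s g| <= eps].

(** Bounded linear operators F(X) -> Y (values off F(X) are irrelevant). *)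
Definition is_op (X Y : normedModType R) (T : ((X -> R) -> R) -> Y) : Prop :=
  (forall (a b : R) mu nu, FX mu -> FX nu ->
     T (fun g => a * mu g + b * nu g) = a *: T mu + b *: T nu) /\
  exists C : R, forall mu, FX mu -> `|T mu| <= C * dnorm mu.

Definition opnorm (X Y : normedModType R) (T : ((X -> R) -> R) -> Y) : R :=
  sup [set r : R | exists mu, [/\ FX mu, dnorm mu <= 1 & r = `|T mu|]].

Definition NA (X Y : normedModType R) (T : ((X -> R) -> R) -> Y) : Prop :=
  is_op T /\ exists mu, [/\ FX mu, dnorm mu = 1 & `|T mu| = opnorm T].

Definition uniformly_convex (Y : normedModType R) : Prop :=
  forall eps : R, 0 < eps -> exists delta : R, 0 < delta /\
    forall x y : Y, `|x| <= 1 -> `|y| <= 1 -> eps <= `|x - y| ->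
      `|(2%:R^-1 : R) *: (x + y)| <= 1 - delta.

Definition A_set (X Y : normedModType R) : set (X -> Y) :=
  [set f | Lip0 f /\ exists (z : Y) (x y : nat -> X),
     [/\ `|z| = lipnorm f, (forall n, x n <> y n) &
         (fun n => (`|x n - y n|)^-1 *: (f (x n) - f (y n))) @ \oo --> z]].

End Defs.

(* A Lipschitz map f : X -> Y extends, Y being complete, to a bounded operator
   T_f on F(X) with T_f delta_x = f x; the norm estimate for T_f on molecules
   comes from Hahn-Banach.  Conversely an operator S gives the Lipschitz map
   g_S = S \o delta with L(g_S) <= ||S||, so f - g_S = g_(T_f - S) is small when
   S is close to T_f.  If S attains its norm N at mu and phi norms z = S mu, the
   identity phi (S mu) = mu (phi \o g_S) forces phi \o g_S to have Lipschitz
   constant N: some difference quotients q of g_S have ||q|| <= N and phi q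
   close to N = phi z.  Uniform convexity then makes q close to z, so g_S
   belongs to A(X, Y). *)

From HB Require Import structures.
From mathcomp Require Import all_boot all_order all_algebra.
From mathcomp Require Import all_classical all_reals all_analysis.
From mathcomp Require Import ring lra.
Import Order.TTheory GRing.Theory Num.Theory.
Import numFieldNormedType.Exports.
Local Open Scope classical_set_scope.
Local Open Scope ring_scope.
Set Implicit Arguments.
Unset Strict Implicit.

Section real_facts.
Context {R : realType}.

Lemma sup_le_ge0 (E : set R) (b : R) : 0 <= b -> ubound E b -> sup E <= b.
Proof.
move=> b0 Eb; have [->|/set0P E0] := eqVneq E set0; first by rewrite sup0.
exact: ge_sup.
Qed.

Lemma le_of_forall_le_addM (K x y : R) : 0 <= K ->
  (forall e, 0 < e -> x <= y + K * e) -> x <= y.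
Proof.
move=> K0 le_xy; apply/ler_addgt0Pr => e e0.
have K1 : 0 < K + 1 by lra.
apply: le_trans (le_xy _ (divr_gt0 e0 K1)) _; rewrite lerD2l mulrA ler_pdivrMr //.
by rewrite mulrC ler_wpM2l ?ltW //; lra.
Qed.

End real_facts.

Section norming_functional.
Context {R : realType} {Y : normedModType R}.

Definition norming_functional (phi : {scalar Y}) (z : Y) :=
  (forall y, phi y <= `|y|) /\ phi z = `|z|.

Lemma norming_functional_norm phi z y : norming_functional phi z -> `|phi y| <= `|y|.
Proof.
move=> [phi_le _]; rewrite ler_norml phi_le andbT lerNl -linearN.
by rewrite -(normrN y) phi_le.
Qed.

Variable z : Y.

(* Graphs of partial linear functionals below the norm and extending [z |-> |z|];
   the empty graph is admitted so that the union of the empty chain qualifies. *)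
Definition dominated_graph (G : set (Y * R)) :=
  [/\ G = set0 \/ G (z, `|z|),
      (forall u r v s a b, G (u, r) -> G (v, s) -> G (a *: u + b *: v, a * r + b * s)) &
      (forall u r, G (u, r) -> r <= `|u|)].

Lemma dominated_graph_maximal :
  exists G, dominated_graph G /\ forall B, G `<` B -> ~ dominated_graph B.
Proof.
apply: Zorn_bigcup => F FP Ftot; split.
- have [[G [FG Gz]]|nGz] := pselect (exists G, F G /\ G (z, `|z|)).
    by right; exists G.
  left; apply/seteqP; split => // p [G FG Gp].
  have [[G0|Gz] _ _] := FP _ FG; first by rewrite G0 in Gp.
  by exfalso; apply: nGz; exists G.
- move=> u r v s a b [G1 F1 G1u] [G2 F2 G2v].
  have [G12|G21] := Ftot _ _ F1 F2.
    by exists G2 => //; have [_ lin _] := FP _ F2; apply: lin => //; exact: G12.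
  by exists G1 => //; have [_ lin _] := FP _ F1; apply: lin => //; exact: G21.
- by move=> u r [G FG Gu]; have [_ _ dom] := FP _ FG; exact: dom.
Qed.

Section dominated_graph.
Variable G : set (Y * R).
Hypotheses (GG : dominated_graph G) (Gz : G (z, `|z|)).

Lemma dominated_graph_fun y r s : G (y, r) -> G (y, s) -> r = s.
Proof.
have [_ lin dom] := GG.
have le_rs a b : G (y, a) -> G (y, b) -> a <= b.
  move=> Ga Gb; have := dom _ _ (lin _ _ _ _ 1 (-1) Ga Gb).
  by rewrite scaleN1r scale1r subrr normr0 mulN1r mul1r subr_le0.
by move=> Gr Gs; apply/eqP; rewrite eq_le !le_rs.
Qed.

Lemma dominated_graph_gap y : exists c, forall u r, G (u, r) ->
  r - `|u - y| <= c /\ c <= `|u + y| - r.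
Proof.
have [_ lin dom] := GG.
pose E := [set x | exists u r, G (u, r) /\ x = r - `|u - y|].
have E_ub v s : G (v, s) -> ubound E (`|v + y| - s).
  move=> Gv _ [u [r [Gu ->]]].
  have := dom _ _ (lin _ _ _ _ 1 1 Gu Gv); rewrite !scale1r !mul1r.
  have -> : u + v = (u - y) + (v + y) by rewrite addrA addrAC subrK.
  have := ler_normD (u - y) (v + y); lra.
exists (sup E) => u r Gu; split.
  by apply: ub_le_sup; [exists (`|z + y| - `|z|); exact: E_ub | exists u, r].
by apply: ge_sup; [exists (`|z| - `|z - y|), z, `|z| | exact: E_ub].
Qed.

Lemma dominated_graph_extend y : ~ (exists r, G (y, r)) ->
  exists B, G `<` B /\ dominated_graph B.
Proof.
move=> Gy; have [_ lin dom] := GG; have [c gap] := dominated_graph_gap y.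
pose B := [set p | exists u r t, G (u, r) /\ p = (u + t *: y, r + t * c)].
have GB : G `<=` B by move=> [u r] Gu; exists u, r, 0; rewrite scale0r mul0r !addr0.
exists B; split.
  split => // BG; apply: Gy; exists c; apply: BG; exists 0, 0, 1; split.
    by have := lin _ _ _ _ 0 0 Gz Gz; rewrite !scale0r !mul0r !addr0.
  by rewrite scale1r mul1r !add0r.
split.
- by right; apply: GB.
- move=> u0 r0 v0 s0 a b [u [r [t [Gu [-> ->]]]]] [v [s [t' [Gv [-> ->]]]]].
  exists (a *: u + b *: v), (a * r + b * s), (a * t + b * t'); split; first exact: lin.
  congr pair; first by rewrite scalerDl !scalerDr !scalerA addrACA.
  by rewrite mulrDl !mulrDr !mulrA addrACA.
- move=> u0 r0 [u [r [t [Gu [-> ->]]]]].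
  have [t0|t0|->] := ltgtP t 0; last by rewrite scale0r mul0r !addr0; exact: dom.
  (* rescale (u, r) by 1/|t| and use the appropriate side of the gap *)
  + have Gu' := lin _ _ _ _ (- t)^-1 0 Gu Gu.
    rewrite scale0r mul0r !addr0 in Gu'; have [+ _] := gap _ _ Gu'.
    have tp : 0 < - t by rewrite oppr_gt0.
    have -> : (- t)^-1 *: u - y = (- t)^-1 *: (u + t *: y).
      by rewrite scalerDr scalerA invrN mulNr mulVf ?lt_eqF // scaleN1r.
    rewrite normrZ gtr0_norm ?invr_gt0 // -mulrBr mulrC ler_pdivrMr // => ?.
    nra.
  + have Gu' := lin _ _ _ _ t^-1 0 Gu Gu.
    rewrite scale0r mul0r !addr0 in Gu'; have [_ +] := gap _ _ Gu'.
    have -> : t^-1 *: u + y = t^-1 *: (u + t *: y).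
      by rewrite scalerDr scalerA mulVf ?gt_eqF // scale1r.
    rewrite normrZ gtr0_norm ?invr_gt0 // -mulrBr mulrC ler_pdivlMr // => ?.
    nra.
Qed.

End dominated_graph.

Lemma exists_norming_functional : exists phi, norming_functional phi z.
Proof.
have [G [[G0z lin dom] Gmax]] := dominated_graph_maximal.
have Gz : G (z, `|z|).
  case: G0z => // G0; exfalso; apply: (Gmax [set (t *: z, t * `|z|) | t in setT]).
    rewrite G0; split => // /(_ (z, `|z|)); apply.
    by exists 1; rewrite ?scale1r ?mul1r.
  split; first by right; exists 1; rewrite ?scale1r ?mul1r.
    move=> _ _ _ _ a b [t _ [<- <-]] [t' _ [<- <-]]; exists (a * t + b * t') => //.
    by rewrite scalerDl !scalerA mulrDl !mulrA.
  by move=> _ _ [t _ [<- <-]]; rewrite normrZ ler_wpM2r // ler_norm.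
have GG : dominated_graph G by split; [right | |].
have Gtot y : exists r, G (y, r).
  apply: contrapT => Gy; have [B [GB BB]] := dominated_graph_extend GG Gz Gy.
  exact: Gmax GB BB.
have /choice [phi Gphi] := Gtot.
have phi_lin a u v : phi (a *: u + v) = a * phi u + phi v.
  apply: (dominated_graph_fun GG (Gphi _)).
  by have := lin _ _ _ _ a 1 (Gphi u) (Gphi v); rewrite scale1r mul1r.
pose phiL : {scalar Y} := HB.pack phi (GRing.isLinear.Build _ _ _ _ phi phi_lin).
exists phiL; split; first by move=> y; exact: dom (Gphi y).
exact: (dominated_graph_fun GG (Gphi z) Gz).
Qed.

End norming_functional.

Section lipschitz.
Context {R : realType} {X Y : normedModType R}.
Implicit Type f : X -> Y.

Lemma dist_gt0 (x y : X) : x <> y -> 0 < `|x - y|.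
Proof. by move=> xy; rewrite normr_gt0 subr_eq0; apply/eqP. Qed.

Lemma lipnorm_ge_quot f x y : Lip0 f -> x <> y -> `|f x - f y| / `|x - y| <= lipnorm f.
Proof.
move=> [_ [C fC]] xy; apply: ub_le_sup; last by exists x, y.
exists C => _ [u [v [uv ->]]]; rewrite ler_pdivrMr ?dist_gt0 //; exact: fC.
Qed.

Lemma lipnorm_lip f x y : Lip0 f -> `|f x - f y| <= lipnorm f * `|x - y|.
Proof.
move=> Lf; have [->|xy] := pselect (x = y); first by rewrite !subrr !normr0 mulr0.
by rewrite -ler_pdivrMr ?dist_gt0 //; exact: lipnorm_ge_quot.
Qed.

Lemma lipnorm_le f b : 0 <= b ->
  (forall x y, `|f x - f y| <= b * `|x - y|) -> lipnorm f <= b.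
Proof.
move=> b0 fb; apply: sup_le_ge0 => // _ [x [y [xy ->]]].
by rewrite ler_pdivrMr ?dist_gt0.
Qed.

Lemma lipnorm_ge0 f : Lip0 f -> 0 <= lipnorm f.
Proof.
move=> Lf; have [[x [y xy]]|noxy] := pselect (exists x y : X, x <> y).
  by apply: le_trans (lipnorm_ge_quot Lf xy); rewrite divr_ge0.
rewrite /lipnorm; set E := (X in sup X); have -> : E = set0.
  by apply/seteqP; split => // r [x [y [xy _]]]; apply: noxy; exists x, y.
by rewrite sup0.
Qed.

Lemma lipnorm_le0_eq0 f x : Lip0 f -> lipnorm f <= 0 -> f x = 0.
Proof.
move=> Lf L0; have := lipnorm_lip x 0 Lf; rewrite (proj1 Lf) !subr0 => fx.
by apply/eqP; rewrite -normr_le0 (le_trans fx) ?mulr_le0_ge0.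
Qed.

Definition diff_quot f (x y : X) : Y := `|x - y|^-1 *: (f x - f y).

Lemma norm_diff_quot f x y : `|diff_quot f x y| = `|f x - f y| / `|x - y|.
Proof. by rewrite normrZ normfV normr_id mulrC. Qed.

End lipschitz.

Definition lip_unit_ball {R : realType} {X : normedModType R} (h : X -> R) :=
  Lip0 h /\ lipnorm h <= 1.

Section lip_unit_ball.
Context {R : realType} {X : normedModType R}.
Implicit Type h : X -> R.

Lemma lip_unit_ballP h : h 0 = 0 -> (forall x y, `|h x - h y| <= `|x - y|) ->
  lip_unit_ball h.
Proof.
move=> h0 h1; have Lh : Lip0 h by split => //; exists 1 => x y; rewrite mul1r.
by split => //; apply: lipnorm_le => // x y; rewrite mul1r.
Qed.

Lemma lip_unit_ball0 : lip_unit_ball (fun _ : X => 0 : R).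
Proof. by apply: lip_unit_ballP => // x y; rewrite subrr normr0. Qed.

Lemma lip_unit_ball_norm h x : lip_unit_ball h -> `|h x| <= `|x|.
Proof.
move=> [Lh h1]; have := lipnorm_lip x 0 Lh; rewrite (proj1 Lh) !subr0 => /le_trans.
by apply; rewrite -[leRHS]mul1r ler_wpM2r.
Qed.

End lip_unit_ball.

Section combinations.
Context {R : realType} {X Y : normedModType R}.
Implicit Types (s : seq (R * X)) (f : X -> Y) (h : X -> R).

Definition eval_comb f s : Y := \sum_(p <- s) p.1 *: f p.2.

Definition scale_comb (a : R) s := [seq (a * p.1, p.2) | p <- s].

Lemma eval_comb_cat f s1 s2 : eval_comb f (s1 ++ s2) = eval_comb f s1 + eval_comb f s2.
Proof. exact: big_cat. Qed.

Lemma eval_comb_scale f a s : eval_comb f (scale_comb a s) = a *: eval_comb f s.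
Proof. by rewrite /eval_comb big_map scaler_sumr; apply: eq_bigr => p _; rewrite scalerA. Qed.

Lemma scalar_eval_comb (phi : {scalar Y}) f s :
  phi (eval_comb f s) = comb_delta s (phi \o f).
Proof. by rewrite linear_sum; apply: eq_bigr => p _; rewrite scalarZ. Qed.

End combinations.

Section comb_delta.
Context {R : realType} {X : normedModType R}.
Implicit Types (s : seq (R * X)) (h : X -> R).

Lemma comb_deltaE s h : comb_delta s h = eval_comb h s.
Proof. by []. Qed.

Lemma comb_delta_lincomb h a s1 b s2 :
  comb_delta (scale_comb a s1 ++ scale_comb b s2) h =
  a * comb_delta s1 h + b * comb_delta s2 h.
Proof. by rewrite !comb_deltaE eval_comb_cat !eval_comb_scale. Qed.

Lemma comb_delta_bound s h : lip_unit_ball h ->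
  `|comb_delta s h| <= \sum_(p <- s) `|p.1| * `|p.2|.
Proof.
move=> hB; apply: le_trans (ler_norm_sum _ _ _) _; apply: ler_sum => p _.
by rewrite normrM ler_wpM2l // lip_unit_ball_norm.
Qed.

End comb_delta.

Section free_space.
Context {R : realType} {X : normedModType R}.
Implicit Types (mu nu : (X -> R) -> R) (h : X -> R) (s : seq (R * X)).

Lemma le_dnorm mu h : FX mu -> lip_unit_ball h -> `|mu h| <= dnorm mu.
Proof.
move=> [_ mu_approx] hB; have [s s_approx] := mu_approx 1 ltr01.
apply: ub_le_sup; last by case: hB => Lh h1; exists h.
exists (\sum_(p <- s) `|p.1| * `|p.2| + 1) => _ [g [Lg g1 ->]].
have := s_approx g Lg g1; have := comb_delta_bound s (conj Lg g1).
have := ler_normD (mu g - comb_delta s g) (comb_delta s g); rewrite subrK; lra.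
Qed.

Lemma dnorm_le mu b : 0 <= b -> (forall h, lip_unit_ball h -> `|mu h| <= b) ->
  dnorm mu <= b.
Proof. by move=> b0 mub; apply: sup_le_ge0 => // _ [g [Lg g1 ->]]; apply: mub. Qed.

Lemma dnorm_ge0 mu : FX mu -> 0 <= dnorm mu.
Proof. by move=> Fmu; apply: le_trans (le_dnorm Fmu lip_unit_ball0). Qed.

Definition approximates mu s (e : R) :=
  forall h, lip_unit_ball h -> `|mu h - comb_delta s h| <= e.

Lemma FX_approximates mu e : FX mu -> 0 < e -> exists s, approximates mu s e.
Proof.
move=> [_ mu_approx] e0; have [s s_e] := mu_approx e e0.
by exists s => h [Lh h1]; exact: s_e.
Qed.

Lemma lincomb_approx mu nu s1 s2 a b e1 e2 h :
  `|mu h - comb_delta s1 h| <= e1 -> `|nu h - comb_delta s2 h| <= e2 ->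
  `|a * mu h + b * nu h - comb_delta (scale_comb a s1 ++ scale_comb b s2) h|
    <= `|a| * e1 + `|b| * e2.
Proof.
move=> mu_e1 nu_e2; rewrite comb_delta_lincomb.
have -> : a * mu h + b * nu h - (a * comb_delta s1 h + b * comb_delta s2 h) =
  a * (mu h - comb_delta s1 h) + b * (nu h - comb_delta s2 h) by ring.
apply: le_trans (ler_normD _ _) _; rewrite !normrM.
by apply: lerD; apply: ler_wpM2l.
Qed.

Lemma FX_lincomb mu nu a b : FX mu -> FX nu -> FX (fun h => a * mu h + b * nu h).
Proof.
move=> [mu0 mu_approx] [nu0 nu_approx]; split.
  by move=> g Lg; rewrite mu0 // nu0 // !mulr0 addr0.
move=> e e0; have k0 : 0 < `|a| + `|b| + 1 by rewrite ltr_pwDr.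
have e'0 : 0 < e / (`|a| + `|b| + 1) by rewrite divr_gt0.
have [s1 s1_approx] := mu_approx _ e'0; have [s2 s2_approx] := nu_approx _ e'0.
exists (scale_comb a s1 ++ scale_comb b s2) => g Lg g1.
apply: le_trans (lincomb_approx a b (s1_approx g Lg g1) (s2_approx g Lg g1)) _.
rewrite -mulrDl mulrA ler_pdivrMr //; nra.
Qed.

(* The molecule [sum_i a_i delta_(x_i)]; elements of [FX] must vanish off Lip_0(X, R). *)
Definition free_comb s : (X -> R) -> R :=
  fun h => if `[< Lip0 h >] then comb_delta s h else 0.

Definition fdelta (x : X) := free_comb [:: (1, x)].

Lemma FX_free_comb s : FX (free_comb s).
Proof.
split; first by move=> g Lg; rewrite /free_comb asboolF.
move=> e e0; exists s => g Lg _; rewrite /free_comb asboolT // subrr normr0.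
exact: ltW.
Qed.

Lemma free_combE s h : Lip0 h -> free_comb s h = comb_delta s h.
Proof. by move=> Lh; rewrite /free_comb asboolT. Qed.

Lemma free_comb_cons (p : R * X) s h :
  free_comb (p :: s) h = p.1 * fdelta p.2 h + 1 * free_comb s h.
Proof.
rewrite /fdelta /free_comb; case: asboolP => _; last by rewrite !mulr0 addr0.
by rewrite /comb_delta !big_cons big_nil /= mul1r addr0 mul1r.
Qed.

Lemma free_comb_nil h : free_comb [::] h = 0.
Proof. by rewrite /free_comb /comb_delta big_nil if_same. Qed.

Lemma dnorm_fdeltaB (x y : X) : dnorm (free_comb [:: (1, x); (-1, y)]) <= `|x - y|.
Proof.
apply: dnorm_le => // h [Lh h1].
rewrite free_combE // /comb_delta !big_cons big_nil /= mul1r mulN1r addr0.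
by apply: le_trans (lipnorm_lip x y Lh) _; rewrite -[leRHS]mul1r ler_wpM2r.
Qed.

Lemma dnorm_approximates mu s e : 0 <= e -> approximates mu s e ->
  dnorm (fun h => 1 * mu h + (-1) * free_comb s h) <= e.
Proof.
move=> e0 mu_s; apply: dnorm_le => // h hB.
by rewrite mul1r mulN1r free_combE ?mu_s //; case: hB.
Qed.

Lemma dnorm_eq1_nontrivial mu : FX mu -> dnorm mu = 1 -> exists x : X, x <> 0.
Proof.
move=> [_ mu_approx] mu1; apply: contrapT => trivX.
have X0 (x : X) : x = 0 by apply: contrapT => x0; apply: trivX; exists x.
have mu0 : mu (fun _ => 0) = 0.
  apply/eqP; rewrite -normr_le0; apply: (@le_of_forall_le_addM _ 1) => // e e0.
  have [s s_approx] := mu_approx e e0.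
  have [L0 L01] := @lip_unit_ball0 R X.
  have := s_approx _ L0 L01; rewrite /comb_delta big1 ?subr0 ?add0r ?mul1r //.
  by move=> p _; rewrite mulr0.
suff : dnorm mu <= 0 by rewrite mu1 ler10.
apply: dnorm_le => // h [Lh _].
have -> : h = (fun _ => 0) by apply: funext => x; rewrite (X0 x) (proj1 Lh).
by rewrite mu0 normr0.
Qed.

End free_space.

Section operators.
Context {R : realType} {X Y : normedModType R}.
Implicit Types (S T : ((X -> R) -> R) -> Y) (mu nu : (X -> R) -> R).

Lemma is_op_lincomb S mu nu a b F : is_op S -> FX mu -> FX nu ->
  (forall h, F h = a * mu h + b * nu h) -> S F = a *: S mu + b *: S nu.
Proof. by move=> [Slin _] Fmu Fnu /funext ->; exact: Slin. Qed.

Lemma op_zero S : is_op S -> S (fun _ => 0) = 0.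
Proof.
move=> Sop; have F0 := @FX_free_comb R X [::].
rewrite (is_op_lincomb (a := 0) (b := 0) Sop F0 F0) ?scale0r ?addr0 // => h.
by rewrite free_comb_nil mul0r addr0.
Qed.

Definition op_delta S (x : X) : Y := S (fdelta x).

Lemma op_free_comb S s : is_op S -> S (free_comb s) = eval_comb (op_delta S) s.
Proof.
move=> Sop; elim: s => [|p s IHs].
  rewrite /eval_comb big_nil -(op_zero Sop); congr S.
  by apply: funext => h; rewrite free_comb_nil.
rewrite /eval_comb big_cons -/(eval_comb _ s) -IHs.
rewrite (is_op_lincomb (a := p.1) (b := 1) Sop (FX_free_comb [:: (1, p.2)])
  (FX_free_comb s)) ?scale1r //.
exact: free_comb_cons.
Qed.

Lemma is_op_bound S : is_op S ->
  exists2 C, 0 <= C & forall mu, FX mu -> `|S mu| <= C * dnorm mu.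
Proof.
move=> [_ [C SC]]; exists (Num.max C 0); first by rewrite le_max lexx orbT.
move=> mu Fmu; apply: le_trans (SC _ Fmu) _.
by rewrite ler_wpM2r ?dnorm_ge0 // le_max lexx.
Qed.

Lemma le_opnorm S mu : is_op S -> FX mu -> dnorm mu <= 1 -> `|S mu| <= opnorm S.
Proof.
move=> Sop Fmu mu1; have [C C0 SC] := is_op_bound Sop.
apply: ub_le_sup; last by exists mu.
exists C => _ [nu [Fnu nu1 ->]]; apply: le_trans (SC _ Fnu) _.
by rewrite -[leRHS]mulr1 ler_wpM2l.
Qed.

Lemma opnorm_ge0 S : is_op S -> 0 <= opnorm S.
Proof.
move=> Sop; apply: le_trans (le_opnorm Sop (FX_free_comb [::]) _) => //.
by apply: dnorm_le => // h _; rewrite free_comb_nil normr0.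
Qed.

Lemma ler_opnorm S mu : is_op S -> FX mu -> `|S mu| <= opnorm S * dnorm mu.
Proof.
move=> Sop Fmu; have [C C0 SC] := is_op_bound Sop.
have [mu0|mu_neq0] := eqVneq (dnorm mu) 0.
  by have := SC _ Fmu; rewrite mu0 !mulr0.
have mu_gt0 : 0 < dnorm mu by rewrite lt_neqAle eq_sym mu_neq0 dnorm_ge0.
pose nu h := (dnorm mu)^-1 * mu h + 0 * mu h.
have Fnu : FX nu by apply: FX_lincomb.
have nu1 : dnorm nu <= 1.
  apply: dnorm_le => // h hB; rewrite /nu mul0r addr0 normrM gtr0_norm ?invr_gt0 //.
  by rewrite ler_pdivrMl // mulr1 le_dnorm.
have := le_opnorm Sop Fnu nu1.
rewrite (is_op_lincomb Sop Fmu Fmu (fun h => erefl (nu h))) scale0r addr0.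
by rewrite normrZ gtr0_norm ?invr_gt0 // ler_pdivrMl // mulrC.
Qed.

Lemma is_opB T S : is_op T -> is_op S -> is_op (fun mu => T mu - S mu).
Proof.
move=> [Tlin [C1 TC1]] [Slin [C2 SC2]]; split.
  by move=> a b mu nu Fmu Fnu; rewrite Tlin // Slin // !scalerBr opprD addrACA.
exists (C1 + C2) => mu Fmu; apply: le_trans (ler_normB _ _) _.
by rewrite mulrDl lerD ?TC1 ?SC2.
Qed.

Lemma op_approximates S mu s e : is_op S -> FX mu -> 0 <= e -> approximates mu s e ->
  `|S mu - S (free_comb s)| <= opnorm S * e.
Proof.
move=> Sop Fmu e0 mu_s.
rewrite -scaleN1r -[S mu]scale1r -(is_op_lincomb Sop Fmu (FX_free_comb s)
  (fun h => erefl (1 * mu h + (-1) * free_comb s h))).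
apply: le_trans (ler_opnorm Sop (FX_lincomb _ _ Fmu (FX_free_comb s))) _.
by rewrite ler_wpM2l ?opnorm_ge0 ?dnorm_approximates.
Qed.

Lemma op_deltaB S x y : is_op S ->
  op_delta S x - op_delta S y = S (free_comb [:: (1, x); (-1, y)]).
Proof.
move=> Sop; rewrite op_free_comb // /eval_comb !big_cons big_nil /=.
by rewrite scale1r scaleN1r addr0.
Qed.

Lemma op_delta_lip S x y : is_op S ->
  `|op_delta S x - op_delta S y| <= opnorm S * `|x - y|.
Proof.
move=> Sop; rewrite op_deltaB //; apply: le_trans (ler_opnorm Sop (FX_free_comb _)) _.
by rewrite ler_wpM2l ?opnorm_ge0 ?dnorm_fdeltaB.
Qed.

Lemma op_delta0 S : is_op S -> op_delta S 0 = 0.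
Proof.
move=> Sop; rewrite -(op_zero Sop); congr S; apply: funext => h.
rewrite /fdelta /free_comb; case: asboolP => // Lh.
by rewrite /comb_delta big_cons big_nil (proj1 Lh) mulr0 addr0.
Qed.

Lemma Lip0_op_delta S : is_op S -> Lip0 (op_delta S).
Proof.
move=> Sop; split; first exact: op_delta0.
by exists (opnorm S) => x y; exact: op_delta_lip.
Qed.

Lemma lipnorm_op_delta S : is_op S -> lipnorm (op_delta S) <= opnorm S.
Proof.
by move=> Sop; apply: lipnorm_le => [|x y]; [exact: opnorm_ge0 | exact: op_delta_lip].
Qed.

End operators.

Section linearization.
Context {R : realType} {X : normedModType R} {Y : completeNormedModType R}.
Implicit Types (mu nu : (X -> R) -> R) (s : seq (R * X)) (h : X -> R).

Lemma approx_comb_exists mu (n : nat) :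
  exists s, FX mu -> approximates mu s n.+1%:R^-1.
Proof.
have [Fmu|nFmu] := pselect (FX mu); last by exists [::].
have n_gt0 : 0 < n.+1%:R^-1 :> R by rewrite invr_gt0 ltr0Sn.
by have [s s_n] := FX_approximates Fmu n_gt0; exists s.
Qed.

Definition approx_comb mu (n : nat) := projT1 (cid (approx_comb_exists mu n)).

Lemma approx_combP mu n : FX mu -> approximates mu (approx_comb mu n) n.+1%:R^-1.
Proof. exact: projT2 (cid (approx_comb_exists mu n)). Qed.

Variables (f : X -> Y) (Lf : Lip0 f).

(* A norming functional phi of [sum_i a_i f(x_i)] reduces the estimate to the
   1-Lipschitz function [phi \o f / lipnorm f]. *)
Lemma eval_comb_le s M : (forall h, lip_unit_ball h -> `|comb_delta s h| <= M) ->
  `|eval_comb f s| <= lipnorm f * M.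
Proof.
move=> sM; have M0 : 0 <= M := le_trans (normr_ge0 _) (sM _ lip_unit_ball0).
have [L0|L_neq0] := eqVneq (lipnorm f) 0.
  rewrite L0 mul0r /eval_comb big1 ?normr0 // => p _.
  by rewrite (lipnorm_le0_eq0 _ Lf) ?L0 // scaler0.
have L_gt0 : 0 < lipnorm f by rewrite lt_neqAle eq_sym L_neq0 lipnorm_ge0.
have [phi phi_norming] := exists_norming_functional (eval_comb f s).
pose h x := (lipnorm f)^-1 * phi (f x).
have hB : lip_unit_ball h.
  apply: lip_unit_ballP => [|x y]; first by rewrite /h (proj1 Lf) linear0 mulr0.
  rewrite /h -mulrBr -linearB normrM gtr0_norm ?invr_gt0 // ler_pdivrMl //.
  exact: le_trans (norming_functional_norm _ phi_norming) (lipnorm_lip _ _ Lf).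
have := sM h hB.
have -> : comb_delta s h = (lipnorm f)^-1 * `|eval_comb f s|.
  rewrite -(proj2 phi_norming) scalar_eval_comb /comb_delta mulr_sumr.
  by apply: eq_bigr => p _; rewrite /h mulrCA.
by rewrite normrM gtr0_norm ?invr_gt0 // normr_id ler_pdivrMl.
Qed.

Lemma approximates_eval_comb mu s1 s2 e1 e2 :
  approximates mu s1 e1 -> approximates mu s2 e2 ->
  `|eval_comb f s1 - eval_comb f s2| <= lipnorm f * (e1 + e2).
Proof.
move=> mu_s1 mu_s2.
have -> : eval_comb f s1 - eval_comb f s2 =
    eval_comb f (scale_comb 1 s1 ++ scale_comb (-1) s2).
  by rewrite eval_comb_cat !eval_comb_scale scale1r scaleN1r.
apply: eval_comb_le => h hB.
rewrite comb_delta_lincomb mul1r mulN1r.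
have -> : comb_delta s1 h - comb_delta s2 h =
  (mu h - comb_delta s2 h) - (mu h - comb_delta s1 h) by ring.
by apply: le_trans (ler_normB _ _) _; rewrite addrC lerD ?mu_s1 ?mu_s2.
Qed.

Definition linearization mu : Y := lim (eval_comb f (approx_comb mu n) @[n --> \oo]).

Lemma linearization_cvg mu : FX mu ->
  eval_comb f (approx_comb mu n) @[n --> \oo] --> linearization mu.
Proof.
move=> Fmu; apply/cauchy_cvgP/cauchy_exP => e e0.
set L := lipnorm f; have L0 : 0 <= L by exact: lipnorm_ge0.
have k0 : 0 < 2 * L + 1 by lra.
have [N _ N_small] := near_infty_natSinv_lt (PosNum (divr_gt0 e0 k0)).
exists (eval_comb f (approx_comb mu N)), N => // n /= Nn; rewrite -ball_normE /=.
apply: le_lt_trans (approximates_eval_comb (approx_combP N Fmu) (approx_combP n Fmu)) _.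
have := N_small N (leqnn N); have := N_small n Nn => /=.
set t := e / _ => n_t N_t; have t0 : 0 < t by rewrite divr_gt0.
have -> : e = (2 * L + 1) * t by rewrite mulrC divfK ?gt_eqF.
apply: le_lt_trans (ler_wpM2l L0 (lerD (ltW N_t) (ltW n_t))) _; nra.
Qed.

Lemma linearization_approx mu s e : FX mu -> approximates mu s e ->
  `|linearization mu - eval_comb f s| <= lipnorm f * e.
Proof.
move=> Fmu mu_s; set L := lipnorm f; have L0 : 0 <= L by exact: lipnorm_ge0.
apply: (@le_of_forall_le_addM _ (L + 1)) => [|eps eps0]; first lra.
have [N _ N_small] := near_infty_natSinv_lt (PosNum eps0).
have /cvgrPdist_le /(_ eps eps0) [M _ M_close] := linearization_cvg Fmu.
have n_close := M_close (maxn N M) (leq_maxr _ _).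
have /ltW n_small := N_small (maxn N M) (leq_maxl _ _); rewrite /= in n_close n_small.
have := approximates_eval_comb (approx_combP (maxn N M) Fmu) mu_s.
have := ler_distD (eval_comb f (approx_comb mu (maxn N M))) (linearization mu)
  (eval_comb f s).
have := ler_wpM2l L0 n_small; rewrite -/L mulrDr mulrDl mul1r.
move: (L * _^-1) (L * eps) (L * e) => Ln Leps Le; lra.
Qed.

Lemma linearization_free_comb s : linearization (free_comb s) = eval_comb f s.
Proof.
apply/eqP; rewrite -subr_eq0 -normr_le0 -(mulr0 (lipnorm f)).
apply: linearization_approx; first exact: FX_free_comb.
by move=> h [Lh _]; rewrite free_combE // subrr normr0.
Qed.

Lemma linearization_fdelta x : linearization (fdelta x) = f x.
Proof.
by rewrite linearization_free_comb /eval_comb big_cons big_nil scale1r addr0.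
Qed.

Lemma linearization_lincomb mu nu a b : FX mu -> FX nu ->
  linearization (fun h => a * mu h + b * nu h) =
  a *: linearization mu + b *: linearization nu.
Proof.
move=> Fmu Fnu; have L0 : 0 <= lipnorm f by exact: lipnorm_ge0.
apply/eqP; rewrite -subr_eq0 -normr_le0.
apply: (@le_of_forall_le_addM _ (2 * lipnorm f * (`|a| + `|b|))) => [|e e0].
  by rewrite !mulr_ge0 // addr_ge0.
have [s1 mu_s1] := FX_approximates Fmu e0.
have [s2 nu_s2] := FX_approximates Fnu e0.
have s_approx : approximates (fun h => a * mu h + b * nu h)
    (scale_comb a s1 ++ scale_comb b s2) (`|a| * e + `|b| * e).
  by move=> h hB; exact: lincomb_approx (mu_s1 h hB) (nu_s2 h hB).
have := linearization_approx (FX_lincomb a b Fmu Fnu) s_approx.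
rewrite eval_comb_cat !eval_comb_scale.
have := linearization_approx Fmu mu_s1; have := linearization_approx Fnu nu_s2.
set T := linearization; set E1 := eval_comb f s1; set E2 := eval_comb f s2.
move=> nu_e mu_e.
move=> lin_e; apply: le_trans (ler_distD (a *: E1 + b *: E2) _ _) _.
have -> : a *: E1 + b *: E2 - (a *: T mu + b *: T nu) =
    a *: (E1 - T mu) + b *: (E2 - T nu) by rewrite !scalerBr opprD addrACA.
apply: le_trans (lerD (lexx _) (ler_normD _ _)) _.
rewrite !normrZ -(distrC (T mu)) -(distrC (T nu)).
have := ler_wpM2l (normr_ge0 a) mu_e; have := ler_wpM2l (normr_ge0 b) nu_e.
nra.
Qed.

Lemma linearization_le mu : FX mu -> `|linearization mu| <= lipnorm f * dnorm mu.
Proof.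
move=> Fmu; have L0 : 0 <= lipnorm f by exact: lipnorm_ge0.
apply: (@le_of_forall_le_addM _ (2 * lipnorm f)) => [|e e0]; first by rewrite mulr_ge0.
have [s mu_s] := FX_approximates Fmu e0.
have s_le : `|eval_comb f s| <= lipnorm f * (dnorm mu + e).
  apply: eval_comb_le => h hB.
  have -> : comb_delta s h = mu h - (mu h - comb_delta s h) by ring.
  by apply: le_trans (ler_normB _ _) _; rewrite lerD ?le_dnorm ?mu_s.
have := linearization_approx Fmu mu_s.
have := ler_distD (eval_comb f s) (linearization mu) 0; rewrite !subr0; nra.
Qed.

Lemma is_op_linearization : is_op linearization.
Proof.
split; first by move=> a b mu nu; exact: linearization_lincomb.
by exists (lipnorm f) => mu; exact: linearization_le.
Qed.

End linearization.

Lemma uniformly_convex_norming {R : realType} {Y : normedModType R} :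
  uniformly_convex Y -> forall e : R, 0 < e -> exists2 d : R, 0 < d < 1 &
    forall (phi : {scalar Y}) (u v : Y), (forall y, phi y <= `|y|) ->
      `|u| <= 1 -> `|v| <= 1 -> 1 - d <= phi u -> 1 - d <= phi v -> `|u - v| < e.
Proof.
move=> UC e e0; have [delta [delta0 UCe]] := UC e e0.
exists (Num.min delta 1 / 2).
  by rewrite divr_gt0 ?lt_min ?delta0 //= ltr_pdivrMr // mul1r gt_min ltr1n orbT.
move=> phi u v phi_le u1 v1 phi_u phi_v; rewrite ltNge; apply/negP => /(UCe _ _ u1 v1).
have := phi_le (2^-1 *: (u + v)); rewrite linearZ linearD /= => mid_le.
have : Num.min delta 1 <= delta by rewrite ge_min lexx.
have : 0 < Num.min delta 1 by rewrite lt_min delta0 ltr01.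
move: (Num.min delta 1) phi_u phi_v mid_le => m; lra.
Qed.

Lemma uniformly_convex_norming_scale {R : realType} {Y : normedModType R} :
  uniformly_convex Y -> forall e N : R, 0 < e -> 0 < N -> exists2 d : R, 0 < d < 1 &
    forall (phi : {scalar Y}) (u v : Y), (forall y, phi y <= `|y|) ->
      `|u| <= N -> `|v| <= N -> (1 - d) * N <= phi u -> (1 - d) * N <= phi v ->
      `|u - v| < e.
Proof.
move=> UC e N e0 N0; have [d d01 close] := uniformly_convex_norming UC (divr_gt0 e0 N0).
exists d => // phi u v phi_le; have Ni0 : 0 < N^-1 by rewrite invr_gt0.
have normZ w : `|N^-1 *: w| = `|w| / N by rewrite normrZ gtr0_norm // mulrC.
have phiZ w : phi (N^-1 *: w) = phi w / N by rewrite scalarZ mulrC.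
have := close phi (N^-1 *: u) (N^-1 *: v) phi_le.
rewrite -scalerBr !normZ !phiZ !ler_pdivrMr // !mul1r !ler_pdivlMr // ltr_pdivrMr //.
by rewrite divfK ?gt_eqF.
Qed.

Section norm_attainment.
Context {R : realType} {X Y : normedModType R}.
Implicit Types (S : ((X -> R) -> R) -> Y) (mu : (X -> R) -> R).

(* The adjoint of S maps phi to the Lipschitz function phi \o op_delta S. *)
Lemma scalar_op_eval S (phi : {scalar Y}) (c : R) (h : X -> R) mu : is_op S ->
  (forall y, `|phi y| <= `|y|) -> lip_unit_ball h ->
  (forall x, phi (op_delta S x) = c * h x) -> FX mu -> phi (S mu) = c * mu h.
Proof.
move=> Sop phi_le hB phi_h Fmu; apply/eqP; rewrite -subr_eq0 -normr_le0.
apply: (@le_of_forall_le_addM _ (opnorm S + `|c|)) => [|e e0].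
  by rewrite addr_ge0 ?opnorm_ge0.
have [s mu_s] := FX_approximates Fmu e0.
have phi_s : phi (S (free_comb s)) = c * comb_delta s h.
  rewrite op_free_comb // scalar_eval_comb /comb_delta mulr_sumr.
  by apply: eq_bigr => p _ /=; rewrite phi_h mulrCA.
have := le_trans (phi_le _) (op_approximates Sop Fmu (ltW e0) mu_s).
rewrite linearB phi_s => S_e.
have := ler_wpM2l (normr_ge0 c) (mu_s h hB).
rewrite -normrM mulrBr distrC => h_e.
have := ler_distD (c * comb_delta s h) (phi (S mu)) (c * mu h).
rewrite add0r mulrDl; lra.
Qed.

Variables (S : ((X -> R) -> R) -> Y) (mu : (X -> R) -> R).
Hypotheses (Sop : is_op S) (Fmu : FX mu) (mu1 : dnorm mu = 1)
  (S_attains : `|S mu| = opnorm S).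

Lemma norming_diff_quot_exists phi d : norming_functional phi (S mu) ->
  0 < opnorm S -> 0 < d < 1 ->
  exists x y, x <> y /\ (1 - d) * opnorm S <= phi (diff_quot (op_delta S) x y).
Proof.
move=> phi_norming N_gt0 /andP[d0 d1]; apply: contrapT => no_quot.
set c := (1 - d) * opnorm S; have c0 : 0 < c by rewrite mulr_gt0 ?subr_gt0.
have quot_lt x y : x <> y -> phi (op_delta S x) - phi (op_delta S y) < c * `|x - y|.
  move=> xy; rewrite -ltr_pdivrMr ?dist_gt0 // mulrC -linearB -scalarZ.
  by rewrite ltNge; apply/negP => quot_ge; apply: no_quot; exists x, y; split.
pose h x := c^-1 * phi (op_delta S x).
have hB : lip_unit_ball h.
  apply: lip_unit_ballP => [|x y]; first by rewrite /h op_delta0 // linear0 mulr0.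
  rewrite /h -mulrBr normrM gtr0_norm ?invr_gt0 // ler_pdivrMl //.
  have [->|xy] := pselect (x = y); first by rewrite !subrr !normr0 mulr0.
  rewrite ler_norml (ltW (quot_lt _ _ xy)) andbT lerNl opprB (distrC x).
  exact: ltW (quot_lt _ _ (nesym xy)).
have phi_h x : phi (op_delta S x) = c * h x by rewrite /h mulVKf ?gt_eqF.
have := scalar_op_eval Sop (fun y => norming_functional_norm y phi_norming) hB phi_h Fmu.
rewrite (proj2 phi_norming) S_attains => N_eq.
have mu_h1 : mu h <= 1 by rewrite -mu1 (le_trans (ler_norm _)) ?le_dnorm.
have : c < opnorm S by rewrite /c -[ltRHS]mul1r ltr_pM2r // ltrBlDr ltrDl.
by rewrite N_eq -[ltLHS]mulr1 ltr_pM2l // ltNge mu_h1.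
Qed.

End norm_attainment.

Lemma A_set_of_diff_quot {R : realType} {X Y : normedModType R} (g : X -> Y) (z : Y) :
  Lip0 g -> lipnorm g <= `|z| ->
  (forall e, 0 < e -> exists x y, x <> y /\ `|diff_quot g x y - z| < e) -> A_set g.
Proof.
move=> Lg gz quot_z; split => //.
have /choice [p p_close] : forall n : nat, exists p : X * X,
    p.1 <> p.2 /\ `|diff_quot g p.1 p.2 - z| < n.+1%:R^-1.
  move=> n; have n_gt0 : 0 < n.+1%:R^-1 :> R by rewrite invr_gt0 ltr0Sn.
  by have [x [y [xy xy_z]]] := quot_z _ n_gt0; exists (x, y).
exists z, (fun n => (p n).1), (fun n => (p n).2); split.
- apply/eqP; rewrite eq_le gz andbT; apply: (@le_of_forall_le_addM _ 1) => // e e0.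
  have [N _ N_small] := near_infty_natSinv_lt (PosNum e0).
  have [pN zN] := p_close N; have := N_small N (leqnn N) => /= N_e.
  have := lipnorm_ge_quot Lg pN; rewrite -norm_diff_quot => quot_le.
  have := ler_distD (diff_quot g (p N).1 (p N).2) z 0; rewrite !subr0 distrC.
  by move=> /le_trans; apply; rewrite mul1r addrC lerD // ltW // (lt_trans zN N_e).
- by move=> n; case: (p_close n).
- apply/cvgrPdist_lt => e e0; have [N _ N_small] := near_infty_natSinv_lt (PosNum e0).
  exists N => // n /= Nn; rewrite distrC.
  exact: lt_trans (p_close n).2 (N_small n Nn).
Qed.

Lemma op_delta_A_set {R : realType} {X : normedModType R} {Y : normedModType R}
    (S : ((X -> R) -> R) -> Y) (mu : (X -> R) -> R) :
  uniformly_convex Y -> is_op S -> FX mu -> dnorm mu = 1 -> `|S mu| = opnorm S ->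
  A_set (op_delta S).
Proof.
move=> UC Sop Fmu mu1 S_attains.
apply: (A_set_of_diff_quot (z := S mu)); first exact: Lip0_op_delta.
  by rewrite S_attains lipnorm_op_delta.
move=> e e0; have [N0|N_gt0] := eqVneq (opnorm S) 0.
  have g0 x : op_delta S x = 0.
    by apply: lipnorm_le0_eq0; [exact: Lip0_op_delta | rewrite -N0 lipnorm_op_delta].
  have [x x0] := dnorm_eq1_nontrivial Fmu mu1; exists x, 0; split => //.
  have /eqP -> : S mu == 0 by rewrite -normr_eq0 S_attains N0.
  by rewrite /diff_quot !g0 subrr scaler0 subr0 normr0.
have {N_gt0}N_gt0 : 0 < opnorm S by rewrite lt_neqAle eq_sym N_gt0 opnorm_ge0.
have [d d01 close] := uniformly_convex_norming_scale UC e0 N_gt0.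
have [phi [phi_le phi_z]] := exists_norming_functional (S mu).
have [x [y [xy q_ge]]] :=
  norming_diff_quot_exists Sop Fmu mu1 S_attains (conj phi_le phi_z) N_gt0 d01.
exists x, y; split => //; apply: (close phi) => //.
- by rewrite norm_diff_quot ler_pdivrMr ?dist_gt0 // op_delta_lip.
- by rewrite S_attains.
- by rewrite phi_z S_attains ler_piMl ?opnorm_ge0 // lerBlDr lerDl ltW // (andP d01).1.
Qed.

Theorem corollary3p9 (R : realType) (X Y : completeNormedModType R) :
  uniformly_convex Y ->
  (forall (T : ((X -> R) -> R) -> Y), is_op T ->
     forall eps : R, 0 < eps ->
       exists S : ((X -> R) -> R) -> Y,
         NA S /\ opnorm (fun mu => T mu - S mu) < eps) ->
  forall f : X -> Y, Lip0 f ->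
    forall eps : R, 0 < eps ->
      exists g : X -> Y, A_set g /\ lipnorm (f \- g) < eps.
Proof.
move=> UC NA_dense f Lf eps eps0.
have Tf_op := is_op_linearization Lf.
have [S [[Sop [mu [Fmu mu1 S_attains]]] TS_eps]] := NA_dense _ Tf_op eps eps0.
exists (op_delta S); split; first exact: op_delta_A_set UC Sop Fmu mu1 S_attains.
have -> : f \- op_delta S = op_delta (fun mu => linearization f mu - S mu).
  by apply: funext => x; rewrite /op_delta /= linearization_fdelta.
exact: le_lt_trans (lipnorm_op_delta (is_opB Tf_op Sop)) TS_eps.
Qed.
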